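(* There exist a first-order theory $T$ and a definable MER $\mathcal E$ for $T$ such that $\mathcal E$ is yclept but not ydlept.
   Context: Throughout, $T$ is a first-order (classical two-valued) theory in a language $L$, and ''definable'' means definable by an $L$-formula without parameters. For a set $\Omega$ of universes for the sorts of $L$, $\mathrm{Mod}_\Omega(T)$ denotes the set of models of $T$ whose universe (in every sort) is given by $\Omega$. The pair language $(L,=,L')$ has the same sorts as $L$ and, for each non-logical symbol $S$ of $L$, two symbols $S$ and $S'$ of the same type; for $L$-structures $M,N$ with the same universe, $(M,N)$ is the $(L,=,L')$-structure interpreting $S$ as $S^M$ and $S'$ as $S^N$. A model equivalence relation (MER) $\mathcal E$ for $T$ is given by a set $\tau$ of $(L,=,L')$-sentences such that for every $\Omega$ the relation $M\,\mathcal E\,N\iff (M,N)\models\tau$ is an equivalence relation on $\mathrm{Mod}_\Omega(T)$; $\mathcal E$ is a definable MER if $\tau$ can be taken finite. A CL-definable predicate (a parameter-free formula of continuous logic over models of $T$) on a finite product $X$ of sorts is a continuous function $F$ from the Stone space $S_X(T)$ of complete types of $T$ in variables of sort $X$ into a compact subset of some $\mathbb R^k$; in $M\models T$ it is interpreted by $F^M(a)=F(\mathrm{tp}(a))$. A MER $\mathcal E$ is yclept if there is a set $\mathcal R$ of CL-definable predicates such that for all $\Omega$ and all $M,N\in\mathrm{Mod}_\Omega(T)$: $M\,\mathcal E\,N$ iff $F^M=F^N$ for every $F\in\mathcal R$. It is ydlept if this holds with $\mathcal R$ a set of first-order $L$-formulas (sentences allowed, for which agreement means equal truth value). *)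

From Stdlib Require Import Reals List.
From Stdlib Require Vectors.Fin.
Open Scope R_scope.

Record lang : Type := Lang {
  sort : Type;
  fsym : Type;                      (* function symbols (constants = 0-ary) *)
  fargs : fsym -> list sort;
  fres : fsym -> sort;
  rsym : Type;
  rargs : rsym -> list sort }.

Arguments fargs {_} _.
Arguments fres {_} _.
Arguments rargs {_} _.

Inductive hlist {S : Type} (Om : S -> Type) : list S -> Type :=
| hnil : hlist Om nil
| hcons : forall s l, Om s -> hlist Om l -> hlist Om (s :: l).
Arguments hnil {S Om}.
Arguments hcons {S Om s l} _ _.

Section Syntax.
Variable L : lang.

(** variables are pairs (sort, index) *)
Inductive term : sort L -> Type :=
| tvar : forall s : sort L, nat -> term s
| tapp : forall f : fsym L, terms (fargs f) -> term (fres f)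
with terms : list (sort L) -> Type :=
| tnil : terms nil
| tcons : forall s l, term s -> terms l -> terms (s :: l).

Arguments tapp f ts.
Arguments tcons {s l} t ts.

Inductive formula : Type :=
| fEq : forall s, term s -> term s -> formula
| fRel : forall r : rsym L, terms (rargs r) -> formula
| fFalse : formula
| fNot : formula -> formula
| fAnd : formula -> formula -> formula
| fOr : formula -> formula -> formula
| fImp : formula -> formula -> formula
| fAll : sort L -> nat -> formula -> formula
| fEx : sort L -> nat -> formula -> formula.

Fixpoint tfree {s} (t : term s) (s' : sort L) (n : nat) : Prop :=
  match t with
  | tvar s0 m => s0 = s' /\ m = n
  | tapp f ts => tsfree ts s' n
  end
with tsfree {l} (ts : terms l) (s' : sort L) (n : nat) : Prop :=
  match ts with
  | tnil => False
  | tcons t ts => tfree t s' n \/ tsfree ts s' n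
  end.

Fixpoint ffree (phi : formula) (s : sort L) (n : nat) : Prop :=
  match phi with
  | fEq _ t u => tfree t s n \/ tfree u s n
  | fRel _ ts => tsfree ts s n
  | fFalse => False
  | fNot p => ffree p s n
  | fAnd p q | fOr p q | fImp p q => ffree p s n \/ ffree q s n
  | fAll s0 m p | fEx s0 m p => ffree p s n /\ ~ (s0 = s /\ m = n)
  end.

Definition sentence (phi : formula) : Prop := forall s n, ~ ffree phi s n.

Definition theory (T : formula -> Prop) : Prop := forall phi, T phi -> sentence phi.

Record structure (Om : sort L -> Type) : Type := Structure {
  sfun : forall f : fsym L, hlist Om (fargs f) -> Om (fres f);
  srel : forall r : rsym L, hlist Om (rargs r) -> Prop }.
Arguments sfun {Om} _ _ _.
Arguments srel {Om} _ _ _.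

Definition valuation (Om : sort L -> Type) := forall s : sort L, nat -> Om s.

Section Eval.
Variables (Om : sort L -> Type) (M : structure Om) (rho : valuation Om).
Fixpoint teval {s} (t : term s) : Om s :=
  match t in term s0 return Om s0 with
  | tvar s0 m => rho s0 m
  | tapp f ts => sfun M f (tseval ts)
  end
with tseval {l} (ts : terms l) : hlist Om l :=
  match ts in terms l0 return hlist Om l0 with
  | tnil => hnil
  | tcons t ts => hcons (teval t) (tseval ts)
  end.
End Eval.
Arguments teval {Om} M rho {s} t.
Arguments tseval {Om} M rho {l} ts.

Definition agree_except {Om} (rho rho' : valuation Om) (s : sort L) (n : nat) : Prop :=
  forall s' m, ~ (s' = s /\ m = n) -> rho' s' m = rho s' m.

Fixpoint sat {Om} (M : structure Om) (rho : valuation Om) (phi : formula) : Prop :=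
  match phi with
  | fEq _ t u => teval M rho t = teval M rho u
  | fRel r ts => srel M r (tseval M rho ts)
  | fFalse => False
  | fNot p => ~ sat M rho p
  | fAnd p q => sat M rho p /\ sat M rho q
  | fOr p q => sat M rho p \/ sat M rho q
  | fImp p q => sat M rho p -> sat M rho q
  | fAll s n p => forall rho', agree_except rho rho' s n -> sat M rho' p
  | fEx s n p => exists rho', agree_except rho rho' s n /\ sat M rho' p
  end.

Definition nonempty_univ (Om : sort L -> Type) : Prop := forall s, inhabited (Om s).

Definition is_model (T : formula -> Prop) {Om} (M : structure Om) : Prop :=
  nonempty_univ Om /\ forall phi, T phi -> forall rho, sat M rho phi.

(** a formula in the variables x_0 : X_0, ..., x_{n-1} : X_{n-1};
    the variable x_i is (X_i, i) *)
Definition in_vars (X : list (sort L)) (phi : formula) : Prop :=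
  forall s n, ffree phi s n -> nth_error X n = Some s.

(** the type of the tuple (rho (X_i) i)_i in M *)
Definition tp {Om} (M : structure Om) (X : list (sort L)) (rho : valuation Om)
  : formula -> Prop := fun phi => in_vars X phi /\ sat M rho phi.

(** p is an element of S_X(T): a maximal set of formulas in x consistent with
    T, i.e. (by completeness) the type of some tuple in some model of T *)
Definition complete_type (T : formula -> Prop) (X : list (sort L))
  (p : formula -> Prop) : Prop :=
  exists (Om : sort L -> Type) (M : structure Om) (rho : valuation Om),
    is_model T M /\ p = tp M X rho.

(** * CL-definable predicates: continuous maps S_X(T) -> R^k with image in a
    compact set.  Continuity is w.r.t. the Stone topology (basic opens [phi])
    and the product topology of R^k. *)
Definition CL_definable (T : formula -> Prop) (X : list (sort L)) (k : nat)
  (F : (formula -> Prop) -> Fin.t k -> R) : Prop :=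
  (forall p, complete_type T X p -> forall eps, 0 < eps ->
     exists phi, p phi /\
       forall q, complete_type T X q -> q phi ->
         forall j, Rabs (F q j - F p j) < eps)
  /\ (exists B, forall p, complete_type T X p -> forall j, Rabs (F p j) <= B).

End Syntax.

Arguments tvar {L} s n.
Arguments tapp {L} f ts.
Arguments tnil {L}.
Arguments tcons {L s l} t ts.
Arguments fEq {L s} t u.
Arguments fRel {L} r ts.
Arguments fFalse {L}.
Arguments fNot {L} _.
Arguments fAnd {L} _ _.
Arguments fOr {L} _ _.
Arguments fImp {L} _ _.
Arguments fAll {L} _ _ _.
Arguments fEx {L} _ _ _.
Arguments tfree {L s} t s' n.
Arguments tsfree {L l} ts s' n.
Arguments ffree {L} phi s n.
Arguments sentence {L} phi.
Arguments theory {L} T.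
Arguments structure {L} Om.
Arguments Structure {L Om} _ _.
Arguments sfun {L Om} _ _ _.
Arguments srel {L Om} _ _ _.
Arguments valuation {L} Om.
Arguments teval {L Om} M rho {s} t.
Arguments tseval {L Om} M rho {l} ts.
Arguments agree_except {L Om} rho rho' s n.
Arguments sat {L Om} M rho phi.
Arguments nonempty_univ {L} Om.
Arguments is_model {L} T {Om} M.
Arguments in_vars {L} X phi.
Arguments tp {L Om} M X rho _.
Arguments complete_type {L} T X p.
Arguments CL_definable {L} T X k F.

Definition pairL (L : lang) : lang :=
  Lang (sort L) (fsym L + fsym L)
       (fun f => match f with inl g => fargs g | inr g => fargs g end)
       (fun f => match f with inl g => fres g | inr g => fres g end)
       (rsym L + rsym L)
       (fun r => match r with inl g => rargs g | inr g => rargs g end).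

Definition pair_structure (L : lang) (Om : sort L -> Type)
  (M N : structure Om) : @structure (pairL L) Om :=
  @Structure (pairL L) Om
    (fun f => match f as f0 return
                hlist Om (fargs (l := pairL L) f0) -> Om (fres (l := pairL L) f0) with
              | inl g => fun a => sfun M g a
              | inr g => fun a => sfun N g a
              end)
    (fun r => match r as r0 return hlist Om (rargs (l := pairL L) r0) -> Prop with
              | inl g => fun a => srel M g a
              | inr g => fun a => srel N g a
              end).

Arguments pair_structure {L Om} M N.

Section MER.
Variables (L : lang) (T : formula L -> Prop) (tau : formula (pairL L) -> Prop).

Definition mer_rel {Om : sort L -> Type} (M N : structure Om) : Prop :=
  forall psi, tau psi -> forall rho, sat (pair_structure M N) rho psi.

Definition is_MER : Prop :=
  (forall psi, tau psi -> sentence psi) /\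
  forall Om : sort L -> Type, nonempty_univ Om ->
    (forall M : structure Om, is_model T M -> mer_rel M M) /\
    (forall M N : structure Om, is_model T M -> is_model T N ->
       mer_rel M N -> mer_rel N M) /\
    (forall M N P : structure Om, is_model T M -> is_model T N -> is_model T P ->
       mer_rel M N -> mer_rel N P -> mer_rel M P).

Definition yclept : Prop :=
  exists (I : Type) (X : I -> list (sort L)) (k : I -> nat)
         (F : forall i, (formula L -> Prop) -> Fin.t (k i) -> R),
    (forall i, CL_definable T (X i) (k i) (F i)) /\
    forall (Om : sort L -> Type) (M N : structure Om),
      is_model T M -> is_model T N ->
      (mer_rel M N <->
       forall i (rho : valuation Om) j,
         F i (tp M (X i) rho) j = F i (tp N (X i) rho) j).

Definition ydlept : Prop :=
  exists Rs : formula L -> Prop,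
    forall (Om : sort L -> Type) (M N : structure Om),
      is_model T M -> is_model T N ->
      (mer_rel M N <->
       forall phi, Rs phi -> forall rho : valuation Om, (sat M rho phi <-> sat N rho phi)).

End MER.

Arguments mer_rel {L} tau {Om} M N.
Arguments is_MER {L} T tau.
Arguments yclept {L} T tau.
Arguments ydlept {L} T tau.

(* Let S be the graph of a function f and read the truth values of P along the f-orbit of a
   point as a binary expansion 0.b0 b1 b2 ..., i.e. as a point of the circle R/Z.  Two models
   are E-equivalent when they have the same S and every orbit expands the same point of the
   circle in both.  Equality of expansions modulo 0111... = 1000... and 0 = 1 is a local
   condition along the orbit, so E is given by four pair sentences.  E is yclept: S itself and
   the map sending a point to its expansion composed with a loop [0,1] -> R^2 identifying only
   0 and 1 are continuous on types.  E is not ydlept: in models made of Z-chains, by an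
   Ehrenfeucht-Fraisse argument a formula under a fixed valuation only sees the labels of the
   main chain in a bounded window [-B, B]; counting from 0 to 2^B in binary inside the window
   links the labelling 0 0 0 ... to the labelling 1 0 0 ... by E-steps and changes outside the
   window, although the expansions 0 and 1/2 are not E-equivalent. *)

From Stdlib Require Import Reals List Lia Lra ZArith.
From Stdlib Require Import Classical ClassicalEpsilon FunctionalExtensionality Eqdep_dec Morphisms.
From Coquelicot Require Import Coquelicot.
(* Coquelicot globally turns on asymmetric patterns. *)
Unset Asymmetric Patterns.
Import ListNotations.

(** * Updating valuations *)

Section Update.
Variables (K : lang) (sort_eq_dec : forall s s' : sort K, {s = s'} + {s <> s'}).
Variable Om : sort K -> Type.

Definition upd (rho : valuation Om) (s : sort K) (n : nat) (x : Om s) : valuation Om :=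
  fun s' m => match sort_eq_dec s s' with
              | left e => if Nat.eqb m n then eq_rect s Om x s' e else rho s' m
              | right _ => rho s' m
              end.

Lemma upd_eq rho s n x : upd rho s n x s n = x.
Proof.
  unfold upd. destruct (sort_eq_dec s s) as [e|]; [|contradiction].
  rewrite Nat.eqb_refl. symmetry. apply eq_rect_eq_dec, sort_eq_dec.
Qed.

Lemma agree_except_upd rho s n x : agree_except rho (upd rho s n x) s n.
Proof.
  intros s' m Hsm. unfold upd. destruct (sort_eq_dec s s') as [<-|]; [|reflexivity].
  destruct (Nat.eqb_spec m n); [tauto|reflexivity].
Qed.

Lemma upd_neq rho s n x m : m <> n -> upd rho s n x s m = rho s m.
Proof. intro Hm. apply agree_except_upd. intros [_ E]. contradiction. Qed.

Lemma agree_except_eq_upd rho rho' s n :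
  agree_except rho rho' s n -> rho' = upd rho s n (rho' s n).
Proof.
  intro H. apply functional_extensionality_dep. intro s'.
  apply functional_extensionality. intro m. unfold upd.
  destruct (sort_eq_dec s s') as [<-|ne].
  - destruct (Nat.eqb_spec m n) as [->|ne].
    + apply eq_rect_eq_dec, sort_eq_dec.
    + apply H. tauto.
  - apply H. intros [? _]. congruence.
Qed.

Lemma forall_agree_except_iff (A : valuation Om -> Prop) rho s n :
  (forall rho', agree_except rho rho' s n -> A rho') <-> forall x, A (upd rho s n x).
Proof.
  split; intro H.
  - intro x. apply H, agree_except_upd.
  - intros rho' Hrho. rewrite (agree_except_eq_upd _ _ _ _ Hrho). apply H.
Qed.

Lemma exists_agree_except_iff (A : valuation Om -> Prop) rho s n :
  (exists rho', agree_except rho rho' s n /\ A rho') <-> exists x, A (upd rho s n x).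
Proof.
  split; intros [x H].
  - destruct H as [Hrho HA]. exists (x s n). now rewrite <- (agree_except_eq_upd _ _ _ _ Hrho).
  - exists (upd rho s n x). split; [apply agree_except_upd|exact H].
Qed.

End Update.

Arguments upd {K} sort_eq_dec {Om} rho s n x.

(** * Binary expansions and the circle *)

Section BinaryExpansions.
Local Open Scope R_scope.

Definition digit (b : bool) : R := if b then 1 else 0.
Definition binval (a : nat -> bool) : R := Series (fun n => digit (a n) * (/2) ^ S n).
Definition stail (a : nat -> bool) : nat -> bool := fun n => a (S n).

Lemma is_series_half_pow : is_series (fun n => (/2) ^ S n) 1.
Proof.
  assert (H : is_series (fun n => (/2) ^ n) (/ (1 - /2)))
    by (apply is_series_geom; rewrite Rabs_pos_eq; lra).
  apply (is_series_scal_l (/2)) in H.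
  replace 1 with (scal (/2) (/ (1 - /2))) by (unfold scal; simpl; unfold mult; simpl; field).
  exact H.
Qed.

Lemma digit_bounds b : 0 <= digit b <= 1.
Proof. destruct b; simpl; lra. Qed.

Lemma ex_series_binval a : ex_series (fun n => digit (a n) * (/2) ^ S n).
Proof.
  apply (ex_series_le (fun n => digit (a n) * (/2) ^ S n) (fun n => (/2) ^ S n));
    [|exists 1; apply is_series_half_pow].
  intro n. unfold norm; simpl. unfold abs; simpl.
  pose proof (pow_lt (/2) (S n) ltac:(lra)). pose proof (digit_bounds (a n)).
  rewrite Rabs_pos_eq; simpl in *; nra.
Qed.

Lemma binval_cons a : binval a = (digit (a 0%nat) + binval (stail a)) / 2.
Proof.
  unfold binval. rewrite Series_incr_1 by apply ex_series_binval.
  rewrite (Series_ext (fun k => digit (a (S k)) * (/2) ^ S (S k))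
                      (fun k => /2 * (digit (stail a k) * (/2) ^ S k)))
    by (intro k; unfold stail; simpl; ring).
  rewrite Series_scal_l. simpl. field.
Qed.

Lemma binval_const_false a : (forall n, a n = false) -> binval a = 0.
Proof.
  intro H. unfold binval.
  rewrite (Series_ext _ (fun n => 0 * (/2) ^ S n)) by (intro n; rewrite H; simpl; ring).
  rewrite Series_scal_l. ring.
Qed.

Lemma binval_negb a : binval a + binval (fun n => negb (a n)) = 1.
Proof.
  unfold binval. rewrite <- Series_plus by apply ex_series_binval.
  apply is_series_unique. eapply is_series_ext; [|exact is_series_half_pow].
  intro n. destruct (a n); simpl; ring.
Qed.

Lemma binval_bounds a : 0 <= binval a <= 1.
Proof.
  assert (Hle : forall a, 0 <= binval a).
  { intro c. rewrite <- (binval_const_false (fun _ => false)) by reflexivity.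
    apply Series_le; [|apply ex_series_binval].
    intro n. pose proof (pow_lt (/2) (S n) ltac:(lra)). pose proof (digit_bounds (c n)).
    simpl digit. split; nra. }
  pose proof (binval_negb a). pose proof (Hle a). pose proof (Hle (fun n => negb (a n))). lra.
Qed.

Lemma binval_const_true a : (forall n, a n = true) -> binval a = 1.
Proof.
  intro H. pose proof (binval_negb a).
  rewrite (binval_const_false (fun n => negb (a n))) in H0 by (intro n; now rewrite H). lra.
Qed.

Lemma binval_ge a m : a m = true -> (/2) ^ S m <= binval a.
Proof.
  revert a. induction m as [|m IH]; intros a Ha; rewrite binval_cons.
  - rewrite Ha. pose proof (binval_bounds (stail a)). simpl digit. simpl. lra.
  - specialize (IH (stail a) Ha). pose proof (digit_bounds (a 0%nat)). simpl in *. lra.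
Qed.

Lemma binval_eq0_iff a : binval a = 0 <-> forall n, a n = false.
Proof.
  split; [|apply binval_const_false].
  intros H n. destruct (a n) eqn:E; [|reflexivity].
  pose proof (binval_ge a n E). pose proof (pow_lt (/2) (S n) ltac:(lra)). lra.
Qed.

Lemma binval_eq1_iff a : binval a = 1 <-> forall n, a n = true.
Proof.
  split; [|apply binval_const_true].
  intros H n. pose proof (binval_negb a) as Hn.
  assert (H0 : binval (fun n => negb (a n)) = 0) by lra.
  rewrite binval_eq0_iff in H0. specialize (H0 n). destruct (a n); easy.
Qed.

Lemma binval_close N a b :
  (forall n, (n < N)%nat -> a n = b n) -> Rabs (binval a - binval b) <= (/2) ^ N.
Proof.
  revert a b. induction N as [|N IH]; intros a b H.
  - pose proof (binval_bounds a). pose proof (binval_bounds b). apply Rabs_le. simpl. lra.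
  - rewrite (binval_cons a), (binval_cons b), (H 0%nat) by lia.
    assert (Ht := IH (stail a) (stail b) (fun n Hn => H (S n) ltac:(lia))).
    replace (_ - _) with ((binval (stail a) - binval (stail b)) / 2) by field.
    unfold Rdiv. rewrite Rabs_mult, (Rabs_pos_eq (/2)) by lra. simpl. lra.
Qed.

(* Two expansions first differing at [D] have the same value exactly when they are the two
   expansions of a dyadic rational: [w 0 1 1 1 ...] and [w 1 0 0 0 ...]. *)
Lemma binval_eq_first_diff D a b :
  (forall n, (n < D)%nat -> a n = b n) -> a D <> b D ->
  (binval a = binval b <-> forall n, (D < n)%nat -> a n = b D /\ b n = a D).
Proof.
  revert a b. induction D as [|D IH]; intros a b Hlt HD;
    rewrite (binval_cons a), (binval_cons b).
  - pose proof (binval_bounds (stail a)). pose proof (binval_bounds (stail b)).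
    assert (Hshift : forall c d, (forall n, stail a n = c) /\ (forall n, stail b n = d) <->
                                 (forall n, (0 < n)%nat -> a n = c /\ b n = d)).
    { intros c d. unfold stail. split.
      - intros [Ha Hb] [|n] Hn; [lia|auto].
      - intro Hall. split; intro n; apply (Hall (S n)); lia. }
    rewrite <- Hshift.
    destruct (a 0%nat), (b 0%nat); try congruence; simpl digit.
    + rewrite <- binval_eq0_iff, <- binval_eq1_iff. lra.
    + rewrite <- binval_eq0_iff, <- binval_eq1_iff. lra.
  - rewrite (Hlt 0%nat) by lia.
    transitivity (binval (stail a) = binval (stail b)); [lra|].
    rewrite (IH (stail a) (stail b)); [|intros n Hn; apply Hlt; lia|exact HD].
    unfold stail. split.
    + intros Hall [|n] Hn; [lia|]. apply Hall. lia.
    + intros Hall n Hn. apply Hall. lia.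
Qed.

Lemma first_diff (a b : nat -> bool) : ~ (forall n, a n = b n) ->
  exists D, (forall n, (n < D)%nat -> a n = b n) /\ a D <> b D.
Proof.
  intro H. apply not_all_ex_not in H. destruct H as [n Hn]. revert Hn.
  induction n as [n IH] using (well_founded_induction lt_wf). intro Hn.
  destruct (classic (forall m, (m < n)%nat -> a m = b m)) as [Hlt|Hlt]; [now exists n|].
  apply not_all_ex_not in Hlt. destruct Hlt as [m Hm].
  apply imply_to_and in Hm. destruct Hm. now apply (IH m).
Qed.

(* [a] and [b] expand the same point of the circle [R/Z]. *)
Definition bin_circle_eq (a b : nat -> bool) : Prop :=
  (forall n, a n = b n) \/
  (exists D, (forall n, (n < D)%nat -> a n = b n) /\ a D <> b D /\
             forall n, (D < n)%nat -> a n = b D /\ b n = a D) \/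
  (forall n, a n <> b n /\ a n = a 0%nat).

Lemma binval_eq_iff a b : binval a = binval b <->
  (forall n, a n = b n) \/
  (exists D, (forall n, (n < D)%nat -> a n = b n) /\ a D <> b D /\
             forall n, (D < n)%nat -> a n = b D /\ b n = a D).
Proof.
  destruct (classic (forall n, a n = b n)) as [Heq|Hne].
  - split; [now left|]. intros _. unfold binval. apply Series_ext. intro n. now rewrite Heq.
  - destruct (first_diff a b Hne) as [D [Hlt HD]].
    rewrite (binval_eq_first_diff D a b Hlt HD). split.
    + intro H. right. now exists D.
    + intros [Heq|[D' [Hlt' [HD' H]]]]; [contradiction|].
      assert (D' = D) as ->; [|exact H].
      destruct (Nat.lt_trichotomy D' D) as [Hc|[Hc|Hc]]; [|exact Hc|];
        exfalso; [apply HD'; apply Hlt|apply HD; apply Hlt']; exact Hc.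
Qed.

Lemma binval_0_1_iff a b :
  (binval a = 0 /\ binval b = 1) \/ (binval a = 1 /\ binval b = 0) <->
  forall n, a n <> b n /\ a n = a 0%nat.
Proof.
  rewrite !binval_eq0_iff, !binval_eq1_iff. split.
  - intros [[Ha Hb]|[Ha Hb]] n; rewrite !Ha, Hb; split; easy.
  - intro H. destruct (a 0%nat) eqn:E; [right|left]; split; intro n;
      destruct (H n) as [Hn Hc]; destruct (b n); congruence.
Qed.

(* A closed curve [[0,1] -> R^2], injective except that it identifies the endpoints. *)
Definition loop {k} (j : Fin.t k) (t : R) : R :=
  match j with Fin.F1 => t * (1 - t) | Fin.FS _ => t * (1 - t) * (t - /2) end.

Lemma loop_eq_iff s t : 0 <= s <= 1 -> 0 <= t <= 1 ->
  (forall j : Fin.t 2, loop j s = loop j t) <-> s = t \/ (s = 0 /\ t = 1) \/ (s = 1 /\ t = 0).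
Proof.
  intros Hs Ht. split.
  - intro H. pose proof (H Fin.F1) as E1. pose proof (H (Fin.FS Fin.F1)) as E2. simpl in E1, E2.
    assert (F : (s - t) * (1 - s - t) = 0) by nra.
    apply Rmult_integral in F. destruct F as [F|F]; [left; lra|].
    assert (t = 1 - s) as -> by lra.
    assert (F2 : s * (1 - s) * (s - /2) = 0) by nra.
    apply Rmult_integral in F2. destruct F2 as [F2|F2]; [|left; lra].
    apply Rmult_integral in F2. right. destruct F2; [left|right]; lra.
  - intros [->|[[-> ->]|[-> ->]]] j; [reflexivity| |]; destruct j; simpl; ring.
Qed.

Lemma loop_binval_eq_iff a b :
  (forall j : Fin.t 2, loop j (binval a) = loop j (binval b)) <-> bin_circle_eq a b.
Proof.
  rewrite loop_eq_iff by apply binval_bounds.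
  rewrite binval_eq_iff, binval_0_1_iff. unfold bin_circle_eq. tauto.
Qed.

Lemma loop_lipschitz {k} (j : Fin.t k) s t : 0 <= s <= 1 -> 0 <= t <= 1 ->
  Rabs (loop j s - loop j t) <= Rabs (s - t).
Proof.
  intros Hs Ht. pose proof (Rabs_pos (s - t)). destruct j; simpl.
  - replace (_ - _) with ((s - t) * (1 - s - t)) by ring.
    rewrite Rabs_mult. assert (Rabs (1 - s - t) <= 1) by (apply Rabs_le; lra). nra.
  - replace (_ - _) with ((s - t) * (- (s * s + s * t + t * t) + 3 / 2 * (s + t) - /2)) by field.
    rewrite Rabs_mult.
    assert (Rabs (- (s * s + s * t + t * t) + 3 / 2 * (s + t) - /2) <= 1)
      by (apply Rabs_le; split; nra).
    nra.
Qed.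

Lemma loop_bounded {k} (j : Fin.t k) t : 0 <= t <= 1 -> Rabs (loop j t) <= 1.
Proof. intro Ht. destruct j; simpl; apply Rabs_le; split; nra. Qed.

End BinaryExpansions.

Lemma bool_neq_negb (x y : bool) : x <> y -> y = negb x.
Proof. destruct x, y; easy. Qed.

(* The local form of [bin_circle_eq], expressed by the sentences [rule1]-[rule3] below:
   a difference persists, after a difference the digits of [a] are constant, and right after
   the first difference they flip. *)
Definition bit_rules (a b : nat -> bool) (n : nat) : Prop :=
  (a n <> b n -> a (S n) <> b (S n)) /\
  (a n <> b n -> a (S n) = a (S (S n))) /\
  (a n = b n -> a (S n) <> b (S n) -> a (S n) <> a (S (S n))).

Lemma bin_circle_eq_bit_rules a b : bin_circle_eq a b -> bit_rules a b 0.
Proof.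
  intros [Heq|[[D [Hlt [HD Hgt]]]|Hcc]]; repeat split; intros H0 **.
  - now rewrite Heq in H0.
  - now rewrite Heq in H0.
  - now rewrite Heq in H.
  - destruct D as [|D]; [|now rewrite Hlt in H0 by lia].
    rewrite (proj1 (Hgt 1%nat ltac:(lia))), (proj2 (Hgt 1%nat ltac:(lia))). congruence.
  - destruct D as [|D]; [|now rewrite Hlt in H0 by lia].
    now rewrite (proj1 (Hgt 1%nat ltac:(lia))), (proj1 (Hgt 2%nat ltac:(lia))).
  - destruct D as [|[|D]]; [contradiction| |now rewrite Hlt in H by lia].
    rewrite (proj1 (Hgt 2%nat ltac:(lia))). congruence.
  - apply Hcc.
  - now rewrite (proj2 (Hcc 1%nat)), (proj2 (Hcc 2%nat)).
  - now apply (Hcc 0%nat) in H0.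
Qed.

Lemma bit_rules_bin_circle_eq a b : (forall n, bit_rules a b n) -> bin_circle_eq a b.
Proof.
  intro Hr. destruct (classic (forall n, a n = b n)) as [Heq|Hne]; [now left|].
  destruct (first_diff a b Hne) as [D [Hlt HD]].
  assert (Hdiff : forall n, (D <= n)%nat -> a n <> b n).
  { intros n Hn. induction Hn as [|n Hn IH]; [exact HD|]. now apply (proj1 (Hr n)). }
  assert (Hconst : forall k, a (S D + k)%nat = a (S D)).
  { induction k as [|k IH]; [now rewrite Nat.add_0_r|].
    rewrite <- IH, Nat.add_succ_r. symmetry.
    apply (proj1 (proj2 (Hr (D + k)%nat))), Hdiff. lia. }
  assert (Hconst' : forall n, (D < n)%nat -> a n = a (S D)).
  { intros n Hn. replace n with (S D + (n - S D))%nat by lia. apply Hconst. }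
  assert (Hsw : (D = 0%nat /\ a 1%nat = a 0%nat) \/ a (S D) = negb (a D)).
  { destruct D as [|D].
    - destruct (Bool.bool_dec (a 1%nat) (a 0%nat)) as [E|E]; [now left|].
      right. apply bool_neq_negb. congruence.
    - right. apply bool_neq_negb, (proj2 (proj2 (Hr D))); [apply Hlt; lia|exact HD]. }
  destruct Hsw as [[-> H10]|Hsw].
  - right; right. intro n. split; [apply Hdiff; lia|].
    destruct n as [|n]; [reflexivity|]. rewrite Hconst' by lia. exact H10.
  - right; left. exists D. do 2 (split; [assumption|]). intros n Hn. split.
    + rewrite (Hconst' n Hn), Hsw, (bool_neq_negb _ _ HD). now destruct (a D).
    + rewrite (bool_neq_negb _ _ (Hdiff n ltac:(lia))), (Hconst' n Hn), Hsw.
      now destruct (a D).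
Qed.

(** * The language, the theory [T] and the sentences [tau] *)

Definition dec (P : Prop) : bool := if excluded_middle_informative P then true else false.

Lemma dec_true_iff P : dec P = true <-> P.
Proof. unfold dec. destruct (excluded_middle_informative P); split; easy. Qed.

Lemma dec_false_iff P : dec P = false <-> ~ P.
Proof. unfold dec. destruct (excluded_middle_informative P); split; easy. Qed.

Lemma dec_eq_iff P Q : dec P = dec Q <-> (P <-> Q).
Proof. rewrite Bool.eq_iff_eq_true, !dec_true_iff. reflexivity. Qed.

#[export] Instance dec_Proper : Proper (iff ==> eq) dec.
Proof. intros P Q H. now apply dec_eq_iff. Qed.

(* One sort and no function symbols; the relation symbol [true] is a binary [S], [false] is a
   unary [P]. *)
Definition L : lang :=
  Lang unit Empty_set (fun f => match f with end) (fun f => match f with end)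
       bool (fun r => if r then [tt; tt] else [tt]).

Definition unit_eq_dec (s s' : unit) : {s = s'} + {s <> s'} :=
  match s, s' with tt, tt => left eq_refl end.

Definition var (n : nat) : term L tt := tvar (L := L) tt n.
Definition pvar (n : nat) : term (pairL L) tt := tvar (L := pairL L) tt n.

Definition Sf (a b : nat) : formula L := fRel (L := L) true (tcons (var a) (tcons (var b) tnil)).
Definition Pf (a : nat) : formula L := fRel (L := L) false (tcons (var a) tnil).

Definition S_total : formula L := fAll (L := L) tt 0 (fEx (L := L) tt 1 (Sf 0 1)).
Definition S_functional : formula L :=
  fAll (L := L) tt 0 (fAll (L := L) tt 1 (fAll (L := L) tt 2
    (fImp (Sf 0 1) (fImp (Sf 0 2) (fEq (var 1) (var 2)))))).
Definition T : formula L -> Prop := fun phi => phi = S_total \/ phi = S_functional.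

Section PairSentences.
Let LL := pairL L.
Let SM a b : formula LL := fRel (L := LL) (inl true) (tcons (pvar a) (tcons (pvar b) tnil)).
Let SN a b : formula LL := fRel (L := LL) (inr true) (tcons (pvar a) (tcons (pvar b) tnil)).
Let PM a : formula LL := fRel (L := LL) (inl false) (tcons (pvar a) tnil).
Let PN a : formula LL := fRel (L := LL) (inr false) (tcons (pvar a) tnil).
Let fIff (p q : formula LL) := fAnd (fImp p q) (fImp q p).
Let Dif a := fNot (fIff (PM a) (PN a)).

Definition same_S : formula LL :=
  fAll (L := LL) tt 0 (fAll (L := LL) tt 1 (fIff (SM 0 1) (SN 0 1))).
Definition rule1 : formula LL :=
  fAll (L := LL) tt 0 (fAll (L := LL) tt 1 (fImp (SM 0 1) (fImp (Dif 0) (Dif 1)))).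
Definition rule2 : formula LL :=
  fAll (L := LL) tt 0 (fAll (L := LL) tt 1 (fImp (SM 0 1) (fAll (L := LL) tt 2
    (fImp (SM 1 2) (fImp (Dif 0) (fIff (PM 1) (PM 2))))))).
Definition rule3 : formula LL :=
  fAll (L := LL) tt 0 (fAll (L := LL) tt 1 (fImp (SM 0 1) (fAll (L := LL) tt 2
    (fImp (SM 1 2) (fImp (fIff (PM 0) (PN 0)) (fImp (Dif 1) (fNot (fIff (PM 1) (PM 2))))))))).
End PairSentences.

Definition tau : list (formula (pairL L)) := [same_S; rule1; rule2; rule3].

Definition const_val {Om : unit -> Type} (x : Om tt) : forall s : unit, nat -> Om s :=
  fun s _ => match s with tt => x end.

Section Orbits.
Variables (X : Type) (f : X -> X).

Definition orbit_bits (p : X -> bool) (x : X) (n : nat) : bool := p (Nat.iter n f x).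

Lemma orbit_bit_rules_iff (p q : X -> bool) :
  (forall x, bit_rules (orbit_bits p x) (orbit_bits q x) 0) <->
  (forall x, bin_circle_eq (orbit_bits p x) (orbit_bits q x)).
Proof.
  split; intros H x.
  - apply bit_rules_bin_circle_eq. intro n. exact (H (Nat.iter n f x)).
  - apply bin_circle_eq_bit_rules, H.
Qed.

End Orbits.

Lemma forall_eq_r {A} (a : A) (P : A -> Prop) : (forall y, y = a -> P y) <-> P a.
Proof. split; [auto|now intros H y ->]. Qed.

Lemma forall_In_tau (P : formula (pairL L) -> Prop) :
  (forall psi, In psi tau -> P psi) <-> P same_S /\ P rule1 /\ P rule2 /\ P rule3.
Proof.
  simpl. split; [intro H; repeat split; apply H; auto|].
  intros (? & ? & ? & ?) psi [<-|[<-|[<-|[<-|[]]]]]; assumption.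
Qed.

Section Semantics.
Context {Om : unit -> Type}.
Implicit Types M N : @structure L Om.

Definition Srel M (x y : Om tt) : Prop := srel M true (hcons x (hcons y hnil)).
Definition Prel M (x : Om tt) : Prop := srel M false (hcons x hnil).
Definition Pbit M (x : Om tt) : bool := dec (Prel M x).

Lemma sat_Sf M rho a b : sat M rho (Sf a b) <-> Srel M (rho tt a) (rho tt b).
Proof. reflexivity. Qed.

Lemma model_T_iff M : is_model T M <->
  inhabited (Om tt) /\ (forall x, exists y, Srel M x y) /\
  (forall x y z, Srel M x y -> Srel M x z -> y = z).
Proof.
  assert (Hsat : forall rho,
    (sat M rho S_total <-> forall x, exists y, Srel M x y) /\
    (sat M rho S_functional <-> forall x y z, Srel M x y -> Srel M x z -> y = z)).
  { intro rho. unfold S_total, S_functional.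
    cbn [sat]. repeat setoid_rewrite (forall_agree_except_iff L unit_eq_dec).
    setoid_rewrite (exists_agree_except_iff L unit_eq_dec). cbn. unfold Srel. tauto. }
  split.
  - intros [Hne HT]. destruct (Hne tt) as [x0].
    split; [now constructor|].
    split; apply (Hsat (const_val x0)), HT; unfold T; auto.
  - intros (Hne & Htot & Hfun). split; [now intros []|].
    intros phi [->| ->] rho; apply (Hsat rho); assumption.
Qed.

Lemma sat_tau_iff M N f rho : (forall x y, Srel M x y <-> y = f x) ->
  (forall psi, In psi tau -> sat (pair_structure M N) rho psi) <->
  (forall x y, Srel M x y <-> Srel N x y) /\
  forall x, bit_rules (orbit_bits _ f (Pbit M) x) (orbit_bits _ f (Pbit N) x) 0.
Proof.
  intro Hf. unfold Srel in Hf. rewrite forall_In_tau. unfold same_S, rule1, rule2, rule3.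
  cbn [sat]. repeat setoid_rewrite (forall_agree_except_iff (pairL L) unit_eq_dec).
  unfold bit_rules, orbit_bits, Pbit, Srel, Prel. cbn. setoid_rewrite dec_eq_iff.
  setoid_rewrite Hf. repeat setoid_rewrite forall_eq_r.
  split.
  - intros (H0 & H1 & H2 & H3). split; [exact H0|].
    intro x. specialize (H1 x). specialize (H2 x). specialize (H3 x). tauto.
  - intros [H0 H]. split; [exact H0|]. split; [|split]; intro y; specialize (H y); tauto.
Qed.

Lemma mer_rel_tau_iff M N f : inhabited (Om tt) -> (forall x y, Srel M x y <-> y = f x) ->
  mer_rel (fun psi => In psi tau) M N <->
  (forall x y, Srel M x y <-> Srel N x y) /\
  forall x, bin_circle_eq (orbit_bits _ f (Pbit M) x) (orbit_bits _ f (Pbit N) x).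
Proof.
  intros [x0] Hf. rewrite <- orbit_bit_rules_iff. unfold mer_rel. split.
  - intro H. apply (sat_tau_iff M N f (const_val x0) Hf). intros psi Hpsi. now apply H.
  - intros H psi Hpsi rho. revert psi Hpsi. now apply (sat_tau_iff M N f rho Hf).
Qed.

Lemma model_T_successor M : is_model T M -> exists f, forall x y, Srel M x y <-> y = f x.
Proof.
  intros (_ & Htot & Hfun)%model_T_iff.
  exists (fun x => proj1_sig (constructive_indefinite_description _ (Htot x))).
  intros x y. destruct (constructive_indefinite_description _ (Htot x)) as [z Hz]. simpl.
  split; [intro H; exact (Hfun x y z H Hz)|now intros ->].
Qed.

End Semantics.

(** * [E] is a yclept MER *)

Fixpoint P_after (n w : nat) : formula L :=
  match n with
  | 0 => Pf w
  | S n => fEx (L := L) tt (S w) (fAnd (Sf w (S w)) (P_after n (S w)))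
  end.

Lemma P_after_free n w s m : ffree (P_after n w) s m -> m = w.
Proof.
  revert w. induction n as [|n IH]; intros w H; simpl in H.
  - now destruct H as [[_ H]|[]].
  - destruct H as [[[[_ H]|[[_ H]|[]]]|H%IH] Hw]; subst; [reflexivity| |]; destruct s; tauto.
Qed.

Lemma P_after_vars n : in_vars (L := L) [tt] (P_after n 0).
Proof. intros s m H. apply P_after_free in H as ->. now destruct s. Qed.

Lemma sat_P_after {Om : unit -> Type} (M : @structure L Om) f :
  (forall x y, Srel M x y <-> y = f x) ->
  forall n w rho, sat M rho (P_after n w) <-> Prel M (Nat.iter n f (rho tt w)).
Proof.
  intro Hf. induction n as [|n IH]; intros w rho; [reflexivity|].
  cbn [P_after sat]. rewrite (exists_agree_except_iff L unit_eq_dec), Nat.iter_succ_r.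
  setoid_rewrite IH. setoid_rewrite sat_Sf. setoid_rewrite Hf.
  setoid_rewrite (upd_eq L unit_eq_dec). setoid_rewrite (upd_neq L unit_eq_dec); [|lia].
  split; [now intros [x [-> H]]|intro H; eexists; split; [reflexivity|exact H]].
Qed.

Definition type_bit (p : formula L -> Prop) (n : nat) : bool := dec (p (P_after n 0)).

Lemma tp_iff {K : lang} {Om : sort K -> Type} (M : structure Om) X rho phi :
  in_vars X phi -> tp M X rho phi <-> sat M rho phi.
Proof. unfold tp. tauto. Qed.

Lemma type_bit_tp {Om : unit -> Type} (M : @structure L Om) f rho :
  (forall x y, Srel M x y <-> y = f x) ->
  type_bit (tp M [tt] rho) = orbit_bits _ f (Pbit M) (rho tt 0%nat).
Proof.
  intro Hf. apply functional_extensionality. intro n. apply dec_eq_iff.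
  rewrite tp_iff by apply P_after_vars. now apply sat_P_after.
Qed.

Definition bit_literal (p : formula L -> Prop) (n : nat) : formula L :=
  if type_bit p n then P_after n 0 else fNot (P_after n 0).

Fixpoint bits_formula (p : formula L -> Prop) (N : nat) : formula L :=
  match N with
  | 0 => fNot fFalse
  | S N => fAnd (bits_formula p N) (bit_literal p N)
  end.

Lemma bits_formula_vars p N : in_vars (L := L) [tt] (bits_formula p N).
Proof.
  induction N as [|N IH]; intros s m H; [contradiction|].
  destruct H as [H|H]; [now apply IH|].
  unfold bit_literal in H. destruct (type_bit p N); now apply (P_after_vars N).
Qed.

Lemma tp_bits_formula {Om : unit -> Type} (M : @structure L Om) rho p N :
  tp M [tt] rho (bits_formula p N) <->
  forall n, (n < N)%nat -> type_bit (tp M [tt] rho) n = type_bit p n.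
Proof.
  rewrite tp_iff by apply bits_formula_vars.
  induction N as [|N IH]; [split; [lia|easy]|].
  cbn [bits_formula sat]. rewrite IH.
  assert (Hlit : sat M rho (bit_literal p N) <-> type_bit (tp M [tt] rho) N = type_bit p N).
  { change (type_bit (tp M [tt] rho) N) with (dec (tp M [tt] rho (P_after N 0))).
    rewrite tp_iff by apply P_after_vars. unfold bit_literal.
    destruct (type_bit p N); cbn [sat]; symmetry; [apply dec_true_iff|apply dec_false_iff]. }
  rewrite Hlit. split.
  - intros [H HN] n Hn. destruct (Nat.eq_dec n N) as [->|]; [exact HN|]. apply H. lia.
  - intro H. split; [intros n Hn|]; apply H; lia.
Qed.

Inductive pred_index := point_index | edge_index.

Definition pred_vars (i : pred_index) : list (sort L) :=
  match i with point_index => [tt] | edge_index => [tt; tt] end.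

(* On a point [x], the point of the circle expanded by the [P]-bits along the [S]-orbit of [x];
   on a pair, the truth value of [S]. *)
Definition pred_val (i : pred_index) (p : formula L -> Prop) (j : Fin.t 2) : R :=
  match i with
  | point_index => loop j (binval (type_bit p))
  | edge_index => if dec (p (Sf 0 1)) then 1 else 0
  end.

Lemma CL_definable_point : CL_definable T [tt] 2 (pred_val point_index).
Proof.
  split; [|exists 1; intros p _ j; apply loop_bounded, binval_bounds].
  intros p [Om [M [rho [_ ->]]]] eps Heps.
  destruct (pow_lt_1_zero (/2) ltac:(rewrite Rabs_pos_eq; lra) eps Heps) as [N HN].
  specialize (HN N (le_n N)). rewrite Rabs_pos_eq in HN by (apply pow_le; lra).
  exists (bits_formula (tp M [tt] rho) N). split; [now apply tp_bits_formula|].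
  intros q [Om' [M' [rho' [_ ->]]]] Hq j. rewrite (tp_bits_formula M') in Hq.
  eapply Rle_lt_trans; [apply loop_lipschitz; apply binval_bounds|].
  eapply Rle_lt_trans; [apply binval_close, Hq|exact HN].
Qed.

Lemma Sf_vars : in_vars (L := L) [tt; tt] (Sf 0 1).
Proof. intros [] m [[_ <-]|[[_ <-]|[]]]; reflexivity. Qed.

Lemma CL_definable_edge : CL_definable T [tt; tt] 2 (pred_val edge_index).
Proof.
  split; [|exists 1; intros p _ j; simpl; destruct (dec _); rewrite ?Rabs_R1, ?Rabs_R0; lra].
  intros p [Om [M [rho [_ ->]]]] eps Heps.
  assert (Hlit : forall b : bool, in_vars (L := L) [tt; tt] (if b then Sf 0 1 else fNot (Sf 0 1)))
    by (intros []; apply Sf_vars).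
  exists (if dec (sat M rho (Sf 0 1)) then Sf 0 1 else fNot (Sf 0 1)).
  rewrite tp_iff by apply Hlit.
  split; [destruct (dec _) eqn:E; [apply dec_true_iff|apply dec_false_iff]; exact E|].
  intros q [Om' [M' [rho' [_ ->]]]] Hq j. simpl.
  rewrite tp_iff in Hq by apply Hlit. rewrite !tp_iff by apply Sf_vars.
  replace (dec (sat M' rho' (Sf 0 1))) with (dec (sat M rho (Sf 0 1))).
  - rewrite Rminus_diag, Rabs_R0. exact Heps.
  - destruct (dec (sat M rho (Sf 0 1))) eqn:E; symmetry;
      [apply dec_true_iff|apply dec_false_iff]; exact Hq.
Qed.

Section PredVal.
Context {Om : unit -> Type}.
Implicit Types M N : @structure L Om.

Lemma pred_val_point_tp M f rho j : (forall x y, Srel M x y <-> y = f x) ->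
  pred_val point_index (tp M [tt] rho) j = loop j (binval (orbit_bits _ f (Pbit M) (rho tt 0%nat))).
Proof. intro Hf. simpl. now rewrite (type_bit_tp M f). Qed.

Lemma pred_val_edge_tp M rho j :
  pred_val edge_index (tp M [tt; tt] rho) j =
  if dec (Srel M (rho tt 0%nat) (rho tt 1%nat)) then 1 else 0.
Proof. simpl. now rewrite tp_iff by apply Sf_vars. Qed.

Lemma same_S_iff_edge M N :
  (forall x y, Srel M x y <-> Srel N x y) <->
  forall rho j,
    pred_val edge_index (tp M [tt; tt] rho) j = pred_val edge_index (tp N [tt; tt] rho) j.
Proof.
  setoid_rewrite pred_val_edge_tp. split.
  - intros H rho j. now rewrite (proj2 (dec_eq_iff _ _) (H _ _)).
  - intros H x y. apply dec_eq_iff.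
    specialize (H (@upd L unit_eq_dec _ (const_val x) tt 1 y) Fin.F1). cbn in H.
    destruct (dec _), (dec _); [reflexivity|lra..|reflexivity].
Qed.

Lemma mer_rel_iff_pred_val M N : is_model T M -> is_model T N ->
  mer_rel (fun psi => In psi tau) M N <->
  forall i rho j, pred_val i (tp M (pred_vars i) rho) j = pred_val i (tp N (pred_vars i) rho) j.
Proof.
  intros HM HN. destruct (model_T_successor M HM) as [f Hf].
  assert (Hne : inhabited (Om tt)) by now apply model_T_iff in HM as [? _].
  rewrite (mer_rel_tau_iff M N f Hne Hf), same_S_iff_edge. split.
  - intros [HS Hcirc] [|] rho j; [|apply HS].
    assert (HfN : forall x y, Srel N x y <-> y = f x)
      by (intros x y; rewrite <- Hf; symmetry; apply same_S_iff_edge, HS).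
    simpl pred_vars. rewrite (pred_val_point_tp M f), (pred_val_point_tp N f) by assumption.
    revert j. apply loop_binval_eq_iff, Hcirc.
  - intro H. assert (HS := fun rho j => H edge_index rho j).
    assert (HfN : forall x y, Srel N x y <-> y = f x)
      by (intros x y; rewrite <- Hf; symmetry; apply same_S_iff_edge, HS).
    split; [exact HS|]. intro x. apply loop_binval_eq_iff. intro j.
    specialize (H point_index (const_val x) j). simpl pred_vars in H.
    now rewrite (pred_val_point_tp M f), (pred_val_point_tp N f) in H.
Qed.

End PredVal.

Lemma T_theory : theory T.
Proof.
  intros phi [->| ->] [] n; cbn; intuition (subst; try discriminate; lia).
Qed.

Lemma tau_sentences psi : In psi tau -> sentence psi.
Proof.
  intros [<-|[<-|[<-|[<-|[]]]]] [] n; cbn; intuition (subst; try discriminate; lia).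
Qed.

Lemma tau_is_MER : is_MER T (fun psi => In psi tau).
Proof.
  split; [exact tau_sentences|]. intros Om _. split; [|split].
  - intros M HM. now apply mer_rel_iff_pred_val.
  - intros M N HM HN H. apply mer_rel_iff_pred_val; [assumption..|].
    intros i rho j. symmetry. revert i rho j. now apply mer_rel_iff_pred_val.
  - intros M N P HM HN HP HMN HNP. apply mer_rel_iff_pred_val; [assumption..|].
    intros i rho j. rewrite (proj1 (mer_rel_iff_pred_val M N HM HN) HMN).
    now apply mer_rel_iff_pred_val.
Qed.

Lemma tau_yclept : yclept T (fun psi => In psi tau).
Proof.
  exists pred_index, pred_vars, (fun _ => 2%nat), pred_val. split.
  - intros []; [apply CL_definable_point|apply CL_definable_edge].
  - intros Om M N HM HN. now apply mer_rel_iff_pred_val.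
Qed.

(** * [E] is not ydlept *)

Definition hhead {S : Type} {Om : S -> Type} {s l} (h : hlist Om (s :: l)) : Om s :=
  match h in hlist _ l0 return match l0 with nil => unit | s0 :: _ => Om s0 end with
  | hnil => tt
  | hcons x _ => x
  end.

Definition htail {S : Type} {Om : S -> Type} {s l} (h : hlist Om (s :: l)) : hlist Om l :=
  match h in hlist _ l0 return match l0 with nil => unit | _ :: l1 => hlist Om l1 end with
  | hnil => tt
  | hcons _ t => t
  end.

Section ChainModels.
Local Open Scope Z_scope.

(* [(None, z)] is the point [z] of the main chain, [(Some (b, i), z)] the point [z] of the
   [i]-th spare chain, which is labelled by [b]. *)
Definition point : Type := (option ((Z -> bool) * nat) * Z)%type.

Definition label (al : Z -> bool) (x : point) : bool :=
  match fst x with None => al (snd x) | Some (b, _) => b (snd x) end.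

Definition shift (x : point) (d : Z) : point := (fst x, snd x + d).

Definition chain_model (al : Z -> bool) : @structure L (fun _ => point) :=
  Structure (L := L)
    (fun f => match f return hlist _ (fargs (l := L) f) -> point with end)
    (fun r => match r as r0 return hlist (fun _ => point) (rargs (l := L) r0) -> Prop with
              | true => fun h => hhead (htail h) = shift (hhead h) 1
              | false => fun h => label al (hhead h) = true
              end).

Lemma shift_0 x : shift x 0 = x.
Proof. destruct x. unfold shift. simpl. f_equal. lia. Qed.

Lemma shift_shift x d e : shift (shift x d) e = shift x (d + e).
Proof. destruct x. unfold shift. simpl. f_equal. lia. Qed.

Lemma shift_eq_iff x y d e : shift x d = shift y e <-> x = shift y (e - d).
Proof.
  destruct x as [x1 x2], y as [y1 y2]. unfold shift. simpl.
  split; intro H; inversion H; subst; f_equal; lia.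
Qed.

Lemma shift_eq_self_iff x e : x = shift x e <-> e = 0.
Proof.
  destruct x as [x1 x2]. unfold shift. simpl.
  split; intro H; [inversion H; lia|subst; f_equal; lia].
Qed.

Lemma chain_model_is_model al : is_model T (chain_model al).
Proof.
  apply model_T_iff. split; [constructor; exact (None, 0)|split].
  - intro x. now exists (shift x 1).
  - intros x y z Hy Hz. cbn in Hy, Hz. congruence.
Qed.

Lemma orbit_bits_chain_model al x :
  orbit_bits _ (fun y => shift y 1) (Pbit (chain_model al)) x =
  fun n => label al (shift x (Z.of_nat n)).
Proof.
  apply functional_extensionality. intro n. unfold orbit_bits, Pbit, Prel. simpl.
  replace (Nat.iter n (fun y => shift y 1) x) with (shift x (Z.of_nat n)).
  - destruct (label al _); [apply dec_true_iff|apply dec_false_iff]; easy.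
  - induction n as [|n IH]; simpl; [now rewrite shift_0|].
    rewrite <- IH, shift_shift. f_equal. lia.
Qed.

(* The radius-[r] neighbourhoods of the left points in [chain_model al] and of the right
   points in [chain_model be] correspond under the listed pairing. *)
Definition local_iso (al be : Z -> bool) (r : Z) (l : list (point * point)) : Prop :=
  (forall p q, In p l -> In q l -> forall d, Z.abs d <= r ->
     (fst q = shift (fst p) d <-> snd q = shift (snd p) d)) /\
  (forall p, In p l -> forall d, Z.abs d <= r ->
     label al (shift (fst p) d) = label be (shift (snd p) d)).

Lemma local_iso_mono al be r r' l l' :
  r' <= r -> incl l' l -> local_iso al be r l -> local_iso al be r' l'.
Proof.
  intros Hr Hl [H1 H2]. split.
  - intros p q Hp Hq d Hd. apply H1; auto. lia.
  - intros p Hp d Hd. apply H2; auto. lia.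
Qed.

Definition swap_pair (e : point * point) : point * point := let (x, y) := e in (y, x).

Lemma map_swap_pair_involutive l : map swap_pair (map swap_pair l) = l.
Proof. induction l as [|[] l IH]; simpl; congruence. Qed.

Lemma local_iso_swap al be r l : local_iso al be r l -> local_iso be al r (map swap_pair l).
Proof.
  intros [H1 H2]. split.
  - intros p q Hp Hq d Hd.
    apply in_map_iff in Hp as [[p1 p2] [<- Hp]], Hq as [[q1 q2] [<- Hq]].
    symmetry. now apply (H1 (p1, p2) (q1, q2)).
  - intros p Hp d Hd. apply in_map_iff in Hp as [[p1 p2] [<- Hp]].
    symmetry. now apply (H2 (p1, p2)).
Qed.

Fixpoint max_spare_index (l : list (point * point)) : nat :=
  match l with
  | nil => 0%nat
  | e :: l' => match fst (snd e) with
               | Some (_, i) => Nat.max i (max_spare_index l')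
               | None => max_spare_index l'
               end
  end.

Lemma max_spare_index_spec l e b i :
  In e l -> fst (snd e) = Some (b, i) -> (i <= max_spare_index l)%nat.
Proof.
  induction l as [|e' l IH]; [easy|]. intros [<-|H] E.
  - destruct e' as [x [[[b' i']|] z]]; simpl in *; inversion E; lia.
  - specialize (IH H E). destruct e' as [x [[[b' i']|] z]]; simpl in *; lia.
Qed.

Lemma local_iso_cons_near al be r l p d : 0 <= r -> local_iso al be (2 * r + 1) l ->
  In p l -> Z.abs d <= r -> local_iso al be r ((shift (fst p) d, shift (snd p) d) :: l).
Proof.
  intros Hr [H1 H2] Hp Hd. split.
  - intros p1 q1 Hp1 Hq1 e He. destruct Hp1 as [<-|Hp1], Hq1 as [<-|Hq1]; simpl.
    + rewrite !shift_shift, !shift_eq_iff, !shift_eq_self_iff. tauto.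
    + rewrite !shift_shift. apply H1; auto. lia.
    + rewrite !shift_eq_iff. apply H1; auto. lia.
    + apply H1; auto. lia.
  - intros p1 Hp1 e He. destruct Hp1 as [<-|Hp1]; simpl.
    + rewrite !shift_shift. apply H2; auto. lia.
    + apply H2; auto. lia.
Qed.

(* A point far from all listed ones is matched with the same position on a new spare chain
   copying the labels of its own chain. *)
Lemma local_iso_cons_fresh al be r l x : local_iso al be r l ->
  (forall p d, In p l -> Z.abs d <= r -> x <> shift (fst p) d) ->
  local_iso al be r
    ((x, (Some (fun w => label al (fst x, w), S (max_spare_index l)), snd x)) :: l).
Proof.
  set (y := (Some (fun w => label al (fst x, w), S (max_spare_index l)), snd x)).
  intros [H1 H2] Hfar.
  assert (Hfresh : forall p e, In p l -> snd p <> shift y e).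
  { intros p e Hp E. apply (f_equal fst) in E. simpl in E.
    pose proof (max_spare_index_spec l p _ _ Hp E). lia. }
  split.
  - intros p1 q1 Hp1 Hq1 e He. destruct Hp1 as [<-|Hp1], Hq1 as [<-|Hq1]; simpl.
    + rewrite !shift_eq_self_iff. tauto.
    + split; intro E; exfalso; [|exact (Hfresh q1 e Hq1 E)].
      apply (Hfar q1 (- e) Hq1 ltac:(lia)). rewrite E, shift_shift.
      apply shift_eq_self_iff. lia.
    + split; intro E; exfalso; [exact (Hfar p1 e Hp1 He E)|].
      apply (Hfresh p1 (- e) Hp1). rewrite E, shift_shift.
      apply shift_eq_self_iff. lia.
    + now apply H1.
  - intros p1 [<-|Hp1] e He; [reflexivity|]. now apply H2.
Qed.

Lemma local_iso_forth al be r l : 0 <= r -> local_iso al be (2 * r + 1) l ->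
  forall x, exists y, local_iso al be r ((x, y) :: l).
Proof.
  intros Hr Hl x.
  destruct (classic (exists p d, In p l /\ Z.abs d <= r /\ x = shift (fst p) d))
    as [[p [d [Hp [Hd ->]]]]|Hfar].
  - eexists. now apply local_iso_cons_near.
  - eexists. apply local_iso_cons_fresh.
    + apply (local_iso_mono al be (2 * r + 1) r l l); [lia|apply incl_refl|exact Hl].
    + intros p d Hp Hd E. apply Hfar. now exists p, d.
Qed.

Lemma local_iso_back al be r l : 0 <= r -> local_iso al be (2 * r + 1) l ->
  forall y, exists x, local_iso al be r ((x, y) :: l).
Proof.
  intros Hr Hl y. apply local_iso_swap in Hl.
  destruct (local_iso_forth _ _ _ _ Hr Hl y) as [x Hx]. exists x.
  apply local_iso_swap in Hx. simpl in Hx.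
  now rewrite map_swap_pair_involutive in Hx.
Qed.

End ChainModels.

Lemma terms_cons_inv {K : lang} {s l} (ts : terms K (s :: l)) : exists t ts', ts = tcons t ts'.
Proof.
  refine (match ts as ts0 in terms _ l0 return
            match l0 return terms K l0 -> Prop with
            | nil => fun _ => True
            | _ :: _ => fun ts1 => exists t ts', ts1 = tcons t ts'
            end ts0 with
          | tnil => I
          | tcons t ts' => ex_intro _ t (ex_intro _ ts' eq_refl)
          end).
Qed.

Lemma terms_nil_inv {K : lang} (ts : terms K nil) : ts = tnil.
Proof.
  refine (match ts as ts0 in terms _ l0 return
            match l0 return terms K l0 -> Prop with
            | nil => fun ts1 => ts1 = tnil
            | _ :: _ => fun _ => True
            end ts0 with
          | tnil => eq_refl
          | tcons _ _ => I
          end).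
Qed.

Lemma term_L_var s (t : term L s) : exists n, t = tvar s n.
Proof. destruct t as [s n|f ts]; [eauto|destruct f]. Qed.

Fixpoint qdepth {K : lang} (phi : formula K) : nat :=
  match phi with
  | fEq _ _ | fRel _ _ | fFalse => 0
  | fNot p => qdepth p
  | fAnd p q | fOr p q | fImp p q => Nat.max (qdepth p) (qdepth q)
  | fAll _ _ p | fEx _ _ p => S (qdepth p)
  end.

Lemma back_forth_iff {A B} (P : A -> Prop) (Q : B -> Prop) :
  (forall x, exists y, P x <-> Q y) -> (forall y, exists x, P x <-> Q y) ->
  ((forall x, P x) <-> (forall y, Q y)) /\ ((exists x, P x) <-> (exists y, Q y)).
Proof.
  intros Hforth Hback. split; split.
  - intros H y. destruct (Hback y) as [x Hx]. now apply Hx.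
  - intros H x. destruct (Hforth x) as [y Hy]. now apply Hy.
  - intros [x Hx]. destruct (Hforth x) as [y Hy]. exists y. now apply Hy.
  - intros [y Hy]. destruct (Hback y) as [x Hx]. exists x. now apply Hx.
Qed.

Section EhrenfeuchtFraisse.
Local Open Scope Z_scope.
Local Notation pval := (@valuation L (fun _ : unit => point)).
Local Notation pupd := (@upd L unit_eq_dec (fun _ : unit => point)).

Fixpoint radius (k : nat) : Z := match k with 0%nat => 1 | S k => 2 * radius k + 1 end.

Lemma radius_ge_1 k : 1 <= radius k.
Proof. induction k; cbn [radius]; lia. Qed.

Lemma radius_mono k k' : (k <= k')%nat -> radius k <= radius k'.
Proof. induction 1 as [|m _ IH]; [lia|]. cbn [radius]. pose proof (radius_ge_1 m). lia. Qed.

Definition val_pairs (r1 r2 : pval) (V : list nat) : list (point * point) :=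
  map (fun n => (r1 tt n, r2 tt n)) V.

Lemma in_val_pairs r1 r2 V n : In n V -> In (r1 tt n, r2 tt n) (val_pairs r1 r2 V).
Proof. intro H. apply in_map_iff. eauto. Qed.

Lemma local_iso_upd al be k r1 r2 V n :
  local_iso al be (radius (S k)) (val_pairs r1 r2 V) ->
  (forall x, exists y, local_iso al be (radius k)
     (val_pairs (pupd r1 tt n x) (pupd r2 tt n y) (n :: V))) /\
  (forall y, exists x, local_iso al be (radius k)
     (val_pairs (pupd r1 tt n x) (pupd r2 tt n y) (n :: V))).
Proof.
  intro HI.
  assert (Hincl : forall x y, incl (val_pairs (pupd r1 tt n x)
                                              (pupd r2 tt n y) (n :: V))
                                   ((x, y) :: val_pairs r1 r2 V)).
  { intros x y e He. apply in_map_iff in He as [m [<- Hm]].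
    destruct (Nat.eq_dec m n) as [->|Hmn].
    - rewrite !(upd_eq L unit_eq_dec). now left.
    - right. rewrite !(upd_neq L unit_eq_dec) by exact Hmn.
      apply in_val_pairs. destruct Hm; [congruence|assumption]. }
  assert (Hr : 0 <= radius k) by (pose proof (radius_ge_1 k); lia).
  split; [intro x; destruct (local_iso_forth al be _ _ Hr HI x) as [y Hxy]; exists y
         |intro y; destruct (local_iso_back al be _ _ Hr HI y) as [x Hxy]; exists x];
    exact (local_iso_mono _ _ _ _ _ _ (Z.le_refl _) (Hincl x y) Hxy).
Qed.

Lemma ffree_quant_in (p : formula L) n V :
  (forall m, ffree (fAll (L := L) tt n p) tt m -> In m V) ->
  forall m, ffree p tt m -> In m (n :: V).
Proof.
  intros HV m Hm. destruct (Nat.eq_dec m n) as [->|Hmn]; [now left|right].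
  apply HV. split; [exact Hm|intros [_ E]; congruence].
Qed.

Lemma local_iso_sat_iff al be (phi : formula L) : forall r1 r2 V,
  (forall m, ffree phi tt m -> In m V) ->
  local_iso al be (radius (qdepth phi)) (val_pairs r1 r2 V) ->
  (sat (chain_model al) r1 phi <-> sat (chain_model be) r2 phi).
Proof.
  induction phi as [s t u|r ts| |p IH|p IHp q IHq|p IHp q IHq|p IHp q IHq|s n p IH|s n p IH];
    intros r1 r2 V HV HI; cbn [qdepth radius] in HI.
  5-7: cbn [sat]; rewrite (IHp r1 r2 V), (IHq r1 r2 V); [reflexivity|..];
    first [intros m Hm; apply HV; simpl; tauto
          |eapply local_iso_mono; [|apply incl_refl|exact HI]; apply radius_mono; lia].
  - destruct s, (term_L_var _ t) as [n ->], (term_L_var _ u) as [m ->].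
    destruct HI as [Hiso _]. cbn.
    pose proof (Hiso _ _ (in_val_pairs r1 r2 V n ltac:(apply HV; simpl; tauto))
                     (in_val_pairs r1 r2 V m ltac:(apply HV; simpl; tauto)) 0) as H0.
    simpl in H0. rewrite !shift_0 in H0. pose proof (radius_ge_1 0).
    split; intro E; symmetry; apply H0; auto; lia.
  - destruct r.
    + destruct (terms_cons_inv ts) as [t1 [ts1 ->]], (terms_cons_inv ts1) as [t2 [ts2 ->]].
      rewrite (terms_nil_inv ts2).
      destruct (term_L_var _ t1) as [n ->], (term_L_var _ t2) as [m ->].
      destruct HI as [Hiso _]. cbn.
      apply (Hiso _ _ (in_val_pairs r1 r2 V n ltac:(apply HV; simpl; tauto))
                      (in_val_pairs r1 r2 V m ltac:(apply HV; simpl; tauto)) 1).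
      simpl. lia.
    + destruct (terms_cons_inv ts) as [t1 [ts1 ->]]. rewrite (terms_nil_inv ts1).
      destruct (term_L_var _ t1) as [n ->].
      destruct HI as [_ Hlab]. cbn.
      pose proof (Hlab _ (in_val_pairs r1 r2 V n ltac:(apply HV; simpl; tauto)) 0) as H0.
      simpl in H0. rewrite !shift_0 in H0. rewrite H0; [reflexivity|simpl; lia].
  - reflexivity.
  - cbn [sat]. now rewrite (IH r1 r2 V).
  - destruct s. cbn [sat]. rewrite !(forall_agree_except_iff L unit_eq_dec).
    destruct (local_iso_upd al be _ r1 r2 V n HI) as [Hforth Hback].
    pose proof (ffree_quant_in p n V HV) as HV'.
    refine (proj1 (back_forth_iff _ _ _ _)); intro z;
      [destruct (Hforth z) as [w Hw]|destruct (Hback z) as [w Hw]];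
      exists w; exact (IH _ _ _ HV' Hw).
  - destruct s. cbn [sat]. rewrite !(exists_agree_except_iff L unit_eq_dec).
    destruct (local_iso_upd al be _ r1 r2 V n HI) as [Hforth Hback].
    pose proof (ffree_quant_in p n V HV) as HV'.
    refine (proj2 (back_forth_iff _ _ _ _)); intro z;
      [destruct (Hforth z) as [w Hw]|destruct (Hback z) as [w Hw]];
      exists w; exact (IH _ _ _ HV' Hw).
Qed.

End EhrenfeuchtFraisse.

Section Locality.
Local Open Scope Z_scope.

Definition tvars {s} (t : term L s) : list nat :=
  match t with tvar _ n => [n] | tapp f _ => match f with end end.

Fixpoint tsvars {l} (ts : terms L l) : list nat :=
  match ts with tnil => nil | tcons t ts => tvars t ++ tsvars ts end.

Fixpoint fvars (phi : formula L) : list nat :=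
  match phi with
  | fEq t u => tvars t ++ tvars u
  | fRel _ ts => tsvars ts
  | fFalse => nil
  | fNot p | fAll _ _ p | fEx _ _ p => fvars p
  | fAnd p q | fOr p q | fImp p q => fvars p ++ fvars q
  end.

Lemma tvars_complete s (t : term L s) s' m : tfree t s' m -> In m (tvars t).
Proof. destruct t as [s0 n|f ts]; [simpl; intros [_ ->]; now left|destruct f]. Qed.

Lemma tsvars_complete l (ts : terms L l) s' m : tsfree ts s' m -> In m (tsvars ts).
Proof.
  induction ts as [|s0 l0 t ts IH]; simpl; [easy|].
  intros [H|H]; apply in_or_app; [left; eapply tvars_complete; eauto|right; auto].
Qed.

Lemma fvars_complete phi s m : ffree phi s m -> In m (fvars phi).
Proof.
  induction phi; simpl; try easy; intro H; try (apply in_or_app; destruct H; [left|right]);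
    eauto using tvars_complete, tsvars_complete; destruct H; auto.
Qed.

Fixpoint sum_abs (l : list Z) : Z := match l with nil => 0 | z :: l => Z.abs z + sum_abs l end.

Lemma sum_abs_nonneg l : 0 <= sum_abs l.
Proof. induction l; simpl; lia. Qed.

Lemma sum_abs_ge l z : In z l -> Z.abs z <= sum_abs l.
Proof.
  induction l as [|z' l IH]; simpl; [easy|].
  intros [->|H]; [pose proof (sum_abs_nonneg l)|specialize (IH H)]; lia.
Qed.

Definition locality_bound (phi : formula L) (rho : @valuation L (fun _ => point)) : Z :=
  sum_abs (map (fun n => snd (rho tt n)) (fvars phi)) + radius (qdepth phi).

Lemma locality_bound_ge_1 phi rho : 1 <= locality_bound phi rho.
Proof.
  unfold locality_bound. pose proof (radius_ge_1 (qdepth phi)).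
  pose proof (sum_abs_nonneg (map (fun n => snd (rho tt n)) (fvars phi))). lia.
Qed.

Lemma sat_chain_model_local phi rho al be :
  (forall z, Z.abs z <= locality_bound phi rho -> al z = be z) ->
  (sat (chain_model al) rho phi <-> sat (chain_model be) rho phi).
Proof.
  intro Hal. apply (local_iso_sat_iff al be phi rho rho (fvars phi)).
  - intros m. apply fvars_complete.
  - split.
    + intros p q Hp Hq d _. apply in_map_iff in Hp as [a [<- _]], Hq as [b [<- _]]. reflexivity.
    + intros p Hp d Hd. apply in_map_iff in Hp as [a [<- Ha]]. simpl.
      assert (Hs : Z.abs (snd (rho tt a)) <= sum_abs (map (fun n => snd (rho tt n)) (fvars phi)))
        by (apply sum_abs_ge, in_map_iff; now exists a).
      unfold label, shift. destruct (rho tt a) as [[[b i]|] z]; simpl in *; [reflexivity|].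
      apply Hal. unfold locality_bound. lia.
Qed.

End Locality.

Section Counting.
Local Open Scope Z_scope.

(* The main chain carries the binary digits of [v] on [-B..B], most significant first,
   [false] before and [t] after. *)
Definition bits_labelling (B : Z) (v : nat) (t : bool) (z : Z) : bool :=
  if z <? - B then false else if z <=? B then Nat.testbit v (Z.to_nat (B - z)) else t.

Lemma testbit_succ_carry v : exists j,
  (forall i, (i < j)%nat -> Nat.testbit v i = true /\ Nat.testbit (S v) i = false) /\
  Nat.testbit v j = false /\ Nat.testbit (S v) j = true /\
  (forall i, (j < i)%nat -> Nat.testbit (S v) i = Nat.testbit v i).
Proof.
  induction v as [v IH] using (well_founded_induction lt_wf).
  destruct (Nat.Even_or_Odd v) as [[w ->]|[w ->]].
  - exists 0%nat. split; [intros; lia|]. split; [apply Nat.testbit_even_0|].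
    replace (S (2 * w)) with (2 * w + 1)%nat by lia. split; [apply Nat.testbit_odd_0|].
    intros [|i] Hi; [lia|]. rewrite Nat.testbit_odd_succ, Nat.testbit_even_succ; auto; lia.
  - destruct (IH w ltac:(lia)) as [j [H1 [H2 [H3 H4]]]].
    replace (S (2 * w + 1)) with (2 * S w)%nat by lia.
    exists (S j). split; [|split; [|split]].
    + intros [|i] Hi; [now rewrite Nat.testbit_odd_0, Nat.testbit_even_0|].
      rewrite Nat.testbit_odd_succ, Nat.testbit_even_succ by lia. apply H1. lia.
    + now rewrite Nat.testbit_odd_succ by lia.
    + now rewrite Nat.testbit_even_succ by lia.
    + intros [|i] Hi; [lia|]. rewrite Nat.testbit_odd_succ, Nat.testbit_even_succ by lia.
      apply H4. lia.
Qed.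

(* A carry: [u 0 1 1 1 ...] and [u 1 0 0 0 ...] expand the same dyadic point. *)
Lemma bin_circle_eq_carry (al be : Z -> bool) D0 :
  (forall z, z < D0 -> al z = be z) -> al D0 = false -> be D0 = true ->
  (forall z, D0 < z -> al z = true /\ be z = false) ->
  forall w, bin_circle_eq (fun n => al (w + Z.of_nat n)) (fun n => be (w + Z.of_nat n)).
Proof.
  intros Hlt Ha Hb Hgt w. right.
  destruct (Z_le_gt_dec w D0) as [Hw|Hw].
  - left. exists (Z.to_nat (D0 - w)).
    replace (w + Z.of_nat (Z.to_nat (D0 - w))) with D0 by lia. rewrite Ha, Hb.
    split; [intros n Hn; apply Hlt; lia|split; [easy|]].
    intros n Hn. apply Hgt. lia.
  - right. intro n. destruct (Hgt (w + Z.of_nat n)), (Hgt (w + Z.of_nat 0)); try lia.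
    split; congruence.
Qed.

Lemma bits_labelling_succ_equiv B v : 0 <= B -> (v < 2 ^ Z.to_nat B)%nat ->
  mer_rel (fun psi => In psi tau)
    (chain_model (bits_labelling B v true)) (chain_model (bits_labelling B (S v) false)).
Proof.
  intros HB Hv. destruct (testbit_succ_carry v) as [j [H1 [H2 [H3 H4]]]].
  assert (Hj : (j <= Z.to_nat B)%nat).
  { destruct (Nat.le_gt_cases j (Z.to_nat B)) as [|Hc]; [assumption|].
    assert (Nat.testbit v (Z.to_nat B) = false) as E.
    { destruct v; [apply Nat.bits_0|apply Nat.bits_above_log2, Nat.log2_lt_pow2; lia]. }
    destruct (H1 _ Hc). congruence. }
  rewrite (mer_rel_tau_iff _ _ (fun x => shift x 1)); [|constructor; exact (None, 0)|reflexivity].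
  split; [reflexivity|]. intros [[c|] w]; rewrite !orbit_bits_chain_model; [now left|].
  apply (bin_circle_eq_carry _ _ (B - Z.of_nat j)); unfold bits_labelling.
  - intros z Hz. destruct (Z.ltb_spec z (- B)); [reflexivity|].
    destruct (Z.leb_spec z B); [|lia]. symmetry. apply H4. lia.
  - destruct (Z.ltb_spec (B - Z.of_nat j) (- B)); [lia|].
    destruct (Z.leb_spec (B - Z.of_nat j) B); [|lia].
    now replace (Z.to_nat (B - (B - Z.of_nat j))) with j by lia.
  - destruct (Z.ltb_spec (B - Z.of_nat j) (- B)); [lia|].
    destruct (Z.leb_spec (B - Z.of_nat j) B); [|lia].
    now replace (Z.to_nat (B - (B - Z.of_nat j))) with j by lia.
  - intros z Hz. destruct (Z.ltb_spec z (- B)); [lia|].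
    destruct (Z.leb_spec z B); [apply H1; lia|easy].
Qed.

Definition zero_label : Z -> bool := fun _ => false.
Definition delta_label : Z -> bool := fun z => Z.eqb z 0.

Lemma not_equiv_zero_delta :
  ~ mer_rel (fun psi => In psi tau) (chain_model zero_label) (chain_model delta_label).
Proof.
  rewrite (mer_rel_tau_iff _ _ (fun x => shift x 1)); [|constructor; exact (None, 0)|reflexivity].
  intros [_ H]. specialize (H (None, 0)). rewrite !orbit_bits_chain_model in H.
  destruct H as [H|[[D [_ [HD H]]]|H]]; cbn in *.
  - discriminate (H 0%nat).
  - destruct D as [|D].
    + destruct (H 1%nat) as [E _]; [lia|discriminate].
    + apply HD. unfold zero_label, delta_label. symmetry. apply Z.eqb_neq. lia.
  - destruct (H 1%nat) as [E _]. now apply E.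
Qed.

(* Counting from [0] to [2^B] with [bits_labelling B] moves the labelling of the main chain from
   [zero_label] to [delta_label] on [-B..B] in [E]-steps, up to changes outside [-B..B]. *)
Lemma invariant_sat_zero_delta phi rho :
  (forall al be, mer_rel (fun psi => In psi tau) (chain_model al) (chain_model be) ->
     (sat (chain_model al) rho phi <-> sat (chain_model be) rho phi)) ->
  (sat (chain_model zero_label) rho phi <-> sat (chain_model delta_label) rho phi).
Proof.
  intros Hinv. pose proof (locality_bound_ge_1 phi rho) as HB.
  set (B := locality_bound phi rho) in *.
  assert (Hin : forall v t t' z, Z.abs z <= B -> bits_labelling B v t z = bits_labelling B v t' z).
  { intros v t t' z Hz. unfold bits_labelling.
    destruct (Z.ltb_spec z (- B)); [reflexivity|]. destruct (Z.leb_spec z B); [reflexivity|lia]. }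
  assert (Hcount : forall n, (n <= 2 ^ Z.to_nat B)%nat ->
     (sat (chain_model (bits_labelling B 0 false)) rho phi <->
      sat (chain_model (bits_labelling B n false)) rho phi)).
  { induction n as [|n IH]; intro Hn; [reflexivity|]. rewrite IH by lia.
    rewrite (sat_chain_model_local phi rho _ (bits_labelling B n true)) by (intros; apply Hin; lia).
    apply Hinv, bits_labelling_succ_equiv; lia. }
  rewrite (sat_chain_model_local phi rho zero_label (bits_labelling B 0 false)),
    (sat_chain_model_local phi rho delta_label (bits_labelling B (2 ^ Z.to_nat B) false)).
  - apply Hcount. lia.
  - intros z Hz. unfold bits_labelling, delta_label. fold B in Hz.
    destruct (Z.ltb_spec z (- B)); [lia|]. destruct (Z.leb_spec z B); [|lia].
    rewrite Nat.pow2_bits_eqb.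
    destruct (Z.eqb_spec z 0), (Nat.eqb_spec (Z.to_nat B) (Z.to_nat (B - z))); lia || reflexivity.
  - intros z Hz. unfold bits_labelling, zero_label. fold B in Hz.
    destruct (Z.ltb_spec z (- B)); [reflexivity|]. destruct (Z.leb_spec z B); [|lia].
    now rewrite Nat.bits_0.
Qed.

End Counting.

Lemma tau_not_ydlept : ~ ydlept T (fun psi => In psi tau).
Proof.
  intros [Rs HRs]. apply not_equiv_zero_delta.
  apply HRs; [apply chain_model_is_model..|]. intros phi Hphi rho.
  apply invariant_sat_zero_delta. intros al be Hab.
  exact (proj1 (HRs _ _ _ (chain_model_is_model al) (chain_model_is_model be)) Hab phi Hphi rho).
Qed.

Theorem mainTheorem6 :
  exists (L : lang) (T : formula L -> Prop) (tau : list (formula (pairL L))),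
    theory T /\
    is_MER T (fun psi => In psi tau) /\
    yclept T (fun psi => In psi tau) /\
    ~ ydlept T (fun psi => In psi tau).
Proof.
  exists L, T, tau. split; [exact T_theory|].
  split; [exact tau_is_MER|]. split; [exact tau_yclept|exact tau_not_ydlept].
Qed.
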